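(* With the notation below, fix $m\ge1$, $\ell$, $a=u_1<\cdots<u_{\ell+1}=b$ and a constraint set $\mathcal A$. Let $c^*(m)$ be the optimal value of the $SDPA$ problem and $y^*(m)$ the optimal value of the $SDP_0$ problem (both defined below), and suppose $y^*(m)>0$. Then $$c^*(m)\le \frac{1+y^*(m)}{y^*(m)}.$$ In particular the $SDPA$ bound is at most the $SDP_0$ bound.
   Context: Let $\Phi_k(t)=\sum_{d=0}^k p_{kd}t^d$ ($k\ge0$) be real polynomials of degree $k$ (the zonal spherical functions of a 2-point-homogeneous space, normalized by $\Phi_k(\tau_0)=1$), and let $a<b$ be reals. For reals $s_0,\ldots,s_{2m-1}$ and $\alpha<\beta$: $R_m=(s_{i+j-2})_{i,j=1}^m$, $F_m^+(\alpha)=(s_{i+j-1}-\alpha s_{i+j-2})_{i,j=1}^m$, $F_m^-(\beta)=(\beta s_{i+j-2}-s_{i+j-1})_{i,j=1}^m$, $H_m(s_0,\ldots,s_{2m-1},[\alpha,\beta])=\operatorname{diag}(R_m,F_m^+(\alpha),F_m^-(\beta))$. $SDP_0$ problem: minimize $y$ over reals $y,x_1,\ldots,x_{2m-1}$ subject to $y+\sum_{i=1}^k p_{ki}x_i\ge -p_{k0}$ for $k=1,\ldots,2m-1$ and $H_m(1,x_1,\ldots,x_{2m-1},[a,b])\succeq0$. $SDPA$ problem: given an integer $\ell\ge1$, reals $a=u_1<\cdots<u_{\ell+1}=b$, and an arbitrary additional set $\mathcal A$ of constraints on $(c,(x_i^{(k)}))$, maximize $c$ over reals $c,z,(x_i^{(k)})_{1\le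 i\le\ell,\,0\le k\le 2m-1}$ subject to: $\begin{pmatrix}1&c\\ c&z\end{pmatrix}\succeq0$; $z=c+\sum_{i=1}^\ell x_i^{(0)}$; $c+\sum_{d=0}^k p_{kd}\sum_{i=1}^\ell x_i^{(d)}\ge0$ for $k=1,\ldots,2m-1$; $H_m(x_i^{(0)},\ldots,x_i^{(2m-1)},[u_i,u_{i+1}])\succeq0$ for $i=1,\ldots,\ell$; and the constraints $\mathcal A$. Optimal values are understood as infimum/supremum. *)

From HB Require Import structures.
From mathcomp Require Import all_boot all_order all_algebra.
From mathcomp Require Import classical_sets reals constructive_ereal ereal.
Unset Printing Implicit Defensive.
Import Order.TTheory GRing.Theory Num.Theory.
Local Open Scope ring_scope.

Section Defs.
Variable R : realType.

Definition psd {n : nat} (A : 'M[R]_n) : Prop :=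
  A^T = A /\ forall v : 'cV[R]_n, 0 <= (v^T *m A *m v) 0 0.

(* 0-based indices: entry (i,j) of R_m is s_{i+j}, i.e. s_{i'+j'-2} with i'=i+1 *)
Definition hankelR m (s : nat -> R) : 'M[R]_m := \matrix_(i, j) s (i + j)%N.
Definition hankelFplus m (s : nat -> R) (al : R) : 'M[R]_m :=
  \matrix_(i, j) (s (i + j).+1 - al * s (i + j)%N).
Definition hankelFminus m (s : nat -> R) (be : R) : 'M[R]_m :=
  \matrix_(i, j) (be * s (i + j)%N - s (i + j).+1).

Definition Hm m (s : nat -> R) (al be : R) : 'M[R]_(m + (m + m)) :=
  block_mx (hankelR m s) 0 0 (block_mx (hankelFplus m s al) 0 0 (hankelFminus m s be)).

Definition sdp0_feasible (Phi : nat -> {poly R}) (m : nat) (a b : R) (y : R) : Prop :=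
  exists x : nat -> R,
    (forall k : nat, (1 <= k <= (2 * m).-1)%N ->
       y + \sum_(1 <= i < k.+1) (Phi k)`_i * x i >= - (Phi k)`_0)
    /\ psd (Hm m (fun d => if d == 0%N then 1 else x d) a b).

Definition mx2 (c z : R) : 'M[R]_2 :=
  \matrix_(i, j) (if (i == 0%N :> nat) && (j == 0%N :> nat) then 1
                  else if (i == 1%N :> nat) && (j == 1%N :> nat) then z else c).

(* Feasibility of c in SDPA; x i d stands for x_{i+1}^{(d)}, interval i is [u i, u (i+1)] *)
Definition sdpa_feasible (Phi : nat -> {poly R}) (m l : nat) (u : nat -> R)
    (A : R -> ('I_l -> 'I_(2 * m) -> R) -> Prop) (c : R) : Prop :=
  exists (z : R) (x : 'I_l -> nat -> R),
    [/\ psd (mx2 c z),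
        z = c + \sum_(i < l) x i 0%N,
        (forall k : nat, (1 <= k <= (2 * m).-1)%N ->
           0 <= c + \sum_(0 <= d < k.+1) (Phi k)`_d * \sum_(i < l) x i d),
        (forall i : 'I_l, psd (Hm m (x i) (u i) (u i.+1))) &
        A c (fun i (k : 'I_(2 * m)) => x i k)].

Local Open Scope classical_set_scope.
Local Open Scope ereal_scope.

Definition y_star Phi m a b : \bar R :=
  ereal_inf [set y%:E | y in [set y | sdp0_feasible Phi m a b y]].
Definition c_star Phi m l u A : \bar R :=
  ereal_sup [set c%:E | c in [set c | sdpa_feasible Phi m l u A c]].
End Defs.
Arguments y_star {R}.
Arguments c_star {R}.
Arguments sdp0_feasible {R}.
Arguments sdpa_feasible {R}.
Arguments Hm {R}.

From HB Require Import structures.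
From mathcomp Require Import all_boot all_order all_algebra.
From mathcomp Require Import classical_sets reals constructive_ereal ereal.
From mathcomp Require Import ring lra boolp.
Import Order.TTheory GRing.Theory Num.Theory.
Local Open Scope ring_scope.

(* Let c > 1 be feasible for SDPA and let s_d be the sum over the subintervals
   of the moment variables x_i^(d).  The 2x2 constraint gives z >= c^2, so
   s_0 = z - c >= c^2 - c > 0.  Each localizing matrix F^+(u_i), F^-(u_(i+1))
   differs from F^+(a), F^-(b) by a nonnegative multiple of the PSD Hankel
   matrix, and H_m is linear in the moments; hence s / s_0 is feasible for
   SDP_0 with objective c / s_0.  Therefore y^* <= c / s_0 <= 1 / (c - 1). *)

Lemma sqr_subr_gt0 {R : realDomainType} {c : R} : 1 < c -> 0 < c ^+ 2 - c.
Proof. by move=> c_gt1; rewrite subr_gt0 expr2 ltr_pMr // (lt_trans ltr01). Qed.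

Section PSD.
Variable R : realType.

Lemma quad_block_mx m n (A : 'M[R]_m) (B : 'M[R]_n) (v1 : 'cV[R]_m) (v2 : 'cV[R]_n) :
  ((col_mx v1 v2)^T *m block_mx A 0 0 B *m col_mx v1 v2) 0 0 =
  (v1^T *m A *m v1) 0 0 + (v2^T *m B *m v2) 0 0.
Proof.
rewrite tr_col_mx mul_row_block !mulmx0 (addr0 (v1^T *m A)) (add0r (v2^T *m B)).
by rewrite mul_row_col !mxE.
Qed.

Lemma psd_block_mx m n (A : 'M[R]_m) (B : 'M[R]_n) :
  psd R (block_mx A 0 0 B) <-> psd R A /\ psd R B.
Proof.
split.
- case; rewrite tr_block_mx !trmx0 => /eq_block_mx [symA _ _ symB] q.
  split; split=> // v.
  + by have := q (col_mx v 0); rewrite quad_block_mx mulmx0 [X in _ + X]mxE addr0.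
  + by have := q (col_mx 0 v); rewrite quad_block_mx trmx0 !mul0mx [X in X + _]mxE add0r.
- case=> [[symA qA] [symB qB]]; split; first by rewrite tr_block_mx !trmx0 symA symB.
  by move=> v; rewrite -(vsubmxK v) quad_block_mx addr_ge0.
Qed.

Lemma psd0 n : psd R (0 : 'M[R]_n).
Proof. by split=> [|v]; rewrite ?trmx0 // mulmx0 mul0mx mxE. Qed.

Lemma psdD n (A B : 'M[R]_n) : psd R A -> psd R B -> psd R (A + B).
Proof.
case=> symA qA [symB qB]; split; first by rewrite linearD /= symA symB.
by move=> v; rewrite mulmxDr mulmxDl mxE addr_ge0.
Qed.

Lemma psdZ n (k : R) (A : 'M[R]_n) : 0 <= k -> psd R A -> psd R (k *: A).
Proof.
move=> k_ge0 [symA qA]; split; first by rewrite linearZ /= symA.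
by move=> v; rewrite -scalemxAr -scalemxAl mxE mulr_ge0.
Qed.

Lemma psd_sum n I (r : seq I) (F : I -> 'M[R]_n) :
  (forall i, psd R (F i)) -> psd R (\sum_(i <- r) F i).
Proof. by move=> psdF; apply: big_ind => //; [exact: psd0 | exact: psdD]. Qed.

Lemma psd_mx2 c z : psd R (mx2 R c z) -> c ^+ 2 <= z.
Proof.
case=> _ /(_ (\col_(i < 2) (if i == 0 :> nat then - c else 1))).
rewrite !mxE !big_ord_recl !big_ord0 /= !mxE !big_ord_recl !big_ord0 /= !mxE /=.
move=> q; rewrite -subr_ge0 (le_trans q) // le_eqVlt; apply/orP; left.
by apply/eqP; ring.
Qed.

End PSD.

Section Hankel.
Context {R : realType} {m : nat}.

Lemma psd_Hm s al be :
  psd R (Hm m s al be) <->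
  [/\ psd R (hankelR R m s), psd R (hankelFplus R m s al)
    & psd R (hankelFminus R m s be)].
Proof. by rewrite /Hm !psd_block_mx; split=> [[? []] | []]. Qed.

Lemma hankelFplus_shift s al w :
  hankelFplus R m s al = hankelFplus R m s w + (w - al) *: hankelR R m s.
Proof. by apply/matrixP=> p q; rewrite !mxE; ring. Qed.

Lemma hankelFminus_shift s be w :
  hankelFminus R m s be = hankelFminus R m s w + (be - w) *: hankelR R m s.
Proof. by apply/matrixP=> p q; rewrite !mxE; ring. Qed.

Lemma hankelR_sum I (r : seq I) (k : R) (x : I -> nat -> R) :
  hankelR R m (fun d => k * \sum_(i <- r) x i d) = k *: \sum_(i <- r) hankelR R m (x i).
Proof.
apply/matrixP=> p q; rewrite !mxE summxE; congr (_ * _).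
by apply: eq_bigr => i _; rewrite mxE.
Qed.

Lemma hankelFplus_sum I (r : seq I) (k al : R) (x : I -> nat -> R) :
  hankelFplus R m (fun d => k * \sum_(i <- r) x i d) al =
  k *: \sum_(i <- r) hankelFplus R m (x i) al.
Proof.
apply/matrixP=> p q; rewrite !mxE summxE.
under [in RHS]eq_bigr do rewrite mxE.
by rewrite sumrB -mulr_sumr; ring.
Qed.

Lemma hankelFminus_sum I (r : seq I) (k be : R) (x : I -> nat -> R) :
  hankelFminus R m (fun d => k * \sum_(i <- r) x i d) be =
  k *: \sum_(i <- r) hankelFminus R m (x i) be.
Proof.
apply/matrixP=> p q; rewrite !mxE summxE.
under [in RHS]eq_bigr do rewrite mxE.
by rewrite sumrB -mulr_sumr; ring.
Qed.

Lemma psd_Hm_sum {I : Type} {r : seq I} {k a b : R} {x : I -> nat -> R} {v w : I -> R} :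
  (forall i, psd R (Hm m (x i) (v i) (w i))) ->
  0 <= k -> (forall i, a <= v i) -> (forall i, w i <= b) ->
  psd R (Hm m (fun d => k * \sum_(i <- r) x i d) a b).
Proof.
move=> psdx k_ge0 av wb; apply/psd_Hm; split.
- rewrite hankelR_sum; apply/psdZ/psd_sum => // i.
  by case/psd_Hm: (psdx i).
- rewrite hankelFplus_sum; apply/psdZ/psd_sum => // i.
  case/psd_Hm: (psdx i) => psdR psdF _.
  rewrite (hankelFplus_shift _ _ (v i)); apply/psdD/psdZ => //.
  by rewrite subr_ge0.
- rewrite hankelFminus_sum; apply/psdZ/psd_sum => // i.
  case/psd_Hm: (psdx i) => psdR _ psdF.
  rewrite (hankelFminus_shift _ _ (w i)); apply/psdD/psdZ => //.
  by rewrite subr_ge0.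
Qed.

End Hankel.

Section Relaxation.
Context {R : realType} {Phi : nat -> {poly R}} {m : nat}.

Lemma sdp0_feasible_normalize (a b c : R) (s : nat -> R) :
  0 < s 0%N ->
  (forall k, (1 <= k <= (2 * m).-1)%N ->
     0 <= c + \sum_(0 <= d < k.+1) (Phi k)`_d * s d) ->
  psd R (Hm m (fun d => (s 0%N)^-1 * s d) a b) ->
  sdp0_feasible Phi m a b (c / s 0%N).
Proof.
move=> s0_gt0 objs psds; exists (fun d => s d / s 0%N); split.
- move=> k k_range; have := objs k k_range.
  rewrite big_ltn; last by case/andP: k_range.
  move=> obj_k; under [X in _ <= _ + X]eq_bigr do rewrite mulrA.
  by rewrite -mulr_suml -mulrDl ler_pdivlMr // mulNr; lra.
- congr (psd R (Hm m _ a b)): psds; apply: funext => -[|d] /=.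
  + by rewrite mulVf // gt_eqF.
  + by rewrite mulrC.
Qed.

Context {l : nat} {u : nat -> R} {A : R -> ('I_l -> 'I_(2 * m) -> R) -> Prop}.
Hypothesis u_incr : forall i, (i < l)%N -> u i < u i.+1.

Lemma u_nondecr : {in [pred i | i <= l]%N &, {homo u : i j / (i <= j)%N >-> i <= j}}.
Proof.
apply: Order.NatMonotonyTheory.nondecn_inP => [i j _ jl k /andP[_ /ltnW kj]|i _].
  by rewrite inE (leq_trans kj).
by rewrite inE => /u_incr/ltW.
Qed.

Lemma sdp0_feasible_of_sdpa {c : R} : 1 < c -> sdpa_feasible Phi m l u A c ->
  exists2 s0, c ^+ 2 - c <= s0 & sdp0_feasible Phi m (u 0%N) (u l) (c / s0).
Proof.
move=> c_gt1 [z [x [/psd_mx2 cz z_def objx psdx _]]].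
pose s d := \sum_(i < l) x i d.
have s0_ge : c ^+ 2 - c <= s 0%N.
  by rewrite [s 0%N](_ : _ = z - c) ?lerD2r // z_def addrAC subrr add0r.
have s0_gt0 : 0 < s 0%N := lt_le_trans (sqr_subr_gt0 c_gt1) s0_ge.
exists (s 0%N) => //; apply: sdp0_feasible_normalize => //.
rewrite /s; apply: (psd_Hm_sum psdx).
- by rewrite invr_ge0 ltW.
- by move=> i; apply: u_nondecr; rewrite ?inE // ltnW.
- by move=> i; apply: u_nondecr; rewrite ?inE.
Qed.

End Relaxation.

Lemma bound_from_mass {R : realFieldType} {y c s : R} :
  0 < y -> 1 < c -> c ^+ 2 - c <= s -> y <= c / s -> c <= (1 + y) / y.
Proof.
move=> y_gt0 c_gt1 cs; have s_gt0 := lt_le_trans (sqr_subr_gt0 c_gt1) cs.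
rewrite ler_pdivlMr // => ys; rewrite ler_pdivlMr //.
have : y * (c ^+ 2 - c) <= c by apply: le_trans ys; rewrite ler_pM2l.
nra.
Qed.

Theorem theorem6p2 (R : realType) (Phi : nat -> {poly R}) (tau0 a b : R)
    (m l : nat) (u : nat -> R) (A : R -> ('I_l -> 'I_(2 * m) -> R) -> Prop) (ys : R) :
  (forall k : nat, size (Phi k) = k.+1) ->
  (forall k : nat, (Phi k).[tau0] = 1) ->
  (1 <= m)%N -> (1 <= l)%N -> a < b ->
  u 0%N = a -> u l = b -> (forall i : nat, (i < l)%N -> u i < u i.+1) ->
  y_star Phi m a b = ys%:E -> 0 < ys ->
  (c_star Phi m l u A <= ((1 + ys) / ys)%:E)%E.
Proof.
move=> _ _ _ _ _ <- <- u_incr ys_def ys_gt0.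
apply: ge_ereal_sup => _ [c feas_c <-]; rewrite lee_fin.
have bound_ge1 : 1 <= (1 + ys) / ys by rewrite ler_pdivlMr // mul1r lerDr ltW.
have [c_le1 | c_gt1] := lerP c 1; first exact: le_trans bound_ge1.
have [s0 s0_ge feas_y] := sdp0_feasible_of_sdpa u_incr c_gt1 feas_c.
apply: (bound_from_mass ys_gt0 c_gt1 s0_ge).
by rewrite -lee_fin -ys_def; apply: ereal_inf_lbound; exists (c / s0).
Qed.
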